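(* Let $\mathcal T\ge2$, $\mathcal S\ge\max\{2\mathcal T,6\}$, and $(t,x)\in\mathbb R\times\mathbb R^3$ with $|t-|x||\le1$ and $|x|\ge\max\{12,\mathcal T,2\mathcal S\}$. Then for $\sigma\in[0,1)$, $$\frac{1}{t+\mathcal T}\int_{|z|=t+\mathcal T}\frac{dS(z)}{|x+z|^{3-\sigma}}\le\frac{C}{|x|^{1-\sigma}},$$ with $C$ independent of $t$ and $x$.
   Context: $dS$ is the surface measure on the sphere $\{|z|=t+\mathcal T\}\subset\mathbb R^3$. *)

From Stdlib Require Import Reals.
From Coquelicot Require Import Coquelicot.
Open Scope R_scope.

Definition R3 := (R * R * R)%type.

Definition add3 (x z : R3) : R3 :=
  let '(x1, x2, x3) := x in let '(z1, z2, z3) := z in (x1 + z1, x2 + z2, x3 + z3).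

Definition norm3 (x : R3) : R :=
  let '(x1, x2, x3) := x in sqrt (x1 ^ 2 + x2 ^ 2 + x3 ^ 2).

Definition sph (r th ph : R) : R3 :=
  (r * sin th * cos ph, r * sin th * sin ph, r * cos th).

(* Surface integral  \int_{|z|=r} f(z) dS(z)  with respect to the surface
   measure of the sphere of radius r in R^3, written in spherical
   coordinates: dS = r^2 sin(th) dph dth, th in [0,pi], ph in [0,2pi]. *)
Definition sphere_integral (r : R) (f : R3 -> R) : R :=
  RInt (fun th => RInt (fun ph => f (sph r th ph) * (r ^ 2 * sin th)) 0 (2 * PI)) 0 PI.

From Stdlib Require Import Reals Lra Psatz.
From Coquelicot Require Import Coquelicot.
Open Scope R_scope.

(* Put |x| = a and r = t + T >= a + 1, and write x = -a e(th0, ph0) in spherical coordinates.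
   For z = r e(th, ph) one has
     |x + z|^2 = (r - a)^2 + 4 a r sin^2((th - th0)/2) + 4 a r sin th sin th0 sin^2((ph - ph0)/2).
   With U = 1 + sqrt(a r) |th - th0| / 3 the first two terms are at least U^2 / 4, so
   |x + z|^(-(1 - sigma)) <~ U^(-(1 - sigma)), while the remaining phi-integral of |x + z|^(-2)
   is a Poisson-type integral of size <~ 1 / (sqrt(a r) U sin th).  Integrating U^(-(2 - sigma))
   in th gives <~ 1 / (sqrt(a r) (1 - sigma)), so the left-hand side is at most
   384 pi / ((1 - sigma) |x|) <= C / |x|^(1 - sigma). *)

Lemma Rpower_gt_0 (x y : R) : 0 < Rpower x y.
Proof. apply exp_pos. Qed.

Lemma Rpower_le_self (a q : R) : 1 <= a -> q <= 1 -> Rpower a q <= a.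
Proof. intros. rewrite <- (Rpower_1 a) at 2 by lra. apply Rle_Rpower; lra. Qed.

Lemma Rpower_half_ge (u q : R) : 0 < u -> 0 <= q <= 1 -> Rpower u q / 2 <= Rpower (u / 2) q.
Proof.
  intros Hu Hq.
  assert (H2 : Rpower 2 q <= 2) by (apply (Rpower_le_self 2 q); lra).
  replace u with (u / 2 * 2) at 1 by field.
  rewrite <- Rpower_mult_distr by lra.
  pose proof (Rpower_gt_0 (u / 2) q). nra.
Qed.

Lemma sin_ge_div3 (y : R) : 0 <= y <= PI / 2 -> y / 3 <= sin y.
Proof.
  intros [H0 H1]. pose proof PI_4 as HPI.
  destruct (sin_bound y 0 H0 ltac:(lra)) as [H _].
  unfold sin_approx, sin_term in H; simpl in H. nra.
Qed.

Lemma sin_sqr_ge (y : R) : Rabs y <= PI / 2 -> y ^ 2 / 9 <= sin y ^ 2.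
Proof.
  intros H. destruct (Rle_or_lt 0 y) as [Hy | Hy].
  - rewrite Rabs_right in H by lra. pose proof (sin_ge_div3 y ltac:(lra)). nra.
  - rewrite Rabs_left in H by lra. pose proof (sin_ge_div3 (- y) ltac:(lra)).
    rewrite sin_neg in H0. nra.
Qed.

Lemma Rabs_sin_le (y : R) : Rabs (sin y) <= Rabs y.
Proof.
  assert (Hpos : forall y, 0 < y -> Rabs (sin y) <= y).
  { intros z Hz. pose proof (sin_lt_x z Hz). pose proof (SIN_bound z). pose proof PI_RGT_0.
    apply Rabs_le. split; [|lra].
    destruct (Rle_or_lt z PI).
    - pose proof (sin_ge_0 z ltac:(lra) ltac:(lra)). lra.
    - pose proof PI2_1. lra. }
  destruct (Rtotal_order y 0) as [Hy | [Hy | Hy]].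
  - rewrite (Rabs_left y) by lra. rewrite <- Rabs_Ropp, <- sin_neg. apply Hpos. lra.
  - subst. rewrite sin_0. apply Rle_refl.
  - rewrite (Rabs_right y) by lra. auto.
Qed.

Lemma sin_sub_le (a b : R) : sin a - sin b <= Rabs (a - b).
Proof.
  rewrite form4.
  apply Rle_trans with (Rabs (2 * cos ((a + b) / 2) * sin ((a - b) / 2))); [apply Rle_abs |].
  rewrite !Rabs_mult, (Rabs_right 2) by lra.
  pose proof (Rabs_sin_le ((a - b) / 2)) as Hs.
  replace (Rabs ((a - b) / 2)) with (Rabs (a - b) / 2) in Hs
    by (unfold Rdiv; rewrite Rabs_mult, (Rabs_right (/ 2)) by lra; reflexivity).
  assert (Hc : Rabs (cos ((a + b) / 2)) <= 1) by apply Rabs_le, COS_bound.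
  pose proof (Rabs_pos (cos ((a + b) / 2))). pose proof (Rabs_pos (sin ((a - b) / 2))).
  nra.
Qed.

Lemma Rpower_base_1 (q : R) : Rpower 1 q = 1.
Proof. unfold Rpower. rewrite ln_1, Rmult_0_r. apply exp_0. Qed.

Lemma Rdiv_le_cross (x y z w : R) : 0 < y -> 0 < w -> x * w <= z * y -> x / y <= z / w.
Proof.
  intros Hy Hw H. apply (Rmult_le_reg_r (y * w)); [nra |].
  replace (x / y * (y * w)) with (x * w) by (field; lra).
  replace (z / w * (y * w)) with (z * y) by (field; lra). exact H.
Qed.

Lemma Rpower_inv_le (N A q : R) : 0 < A <= N ^ 2 -> 0 <= q -> 0 < N ->
  / Rpower N (q + 2) <= / Rpower (sqrt A) q * / N ^ 2.
Proof.
  intros HA Hq HN. rewrite <- Rinv_mult.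
  apply Rinv_le_contravar; [apply Rmult_lt_0_compat; [apply Rpower_gt_0 | nra] |].
  rewrite Rpower_plus. replace (Rpower N 2) with (Rpower N (INR 2)) by (f_equal; simpl; ring).
  rewrite Rpower_pow by exact HN.
  apply Rmult_le_compat_r; [apply pow2_ge_0 |].
  apply Rle_Rpower_l; [exact Hq | split; [apply sqrt_lt_R0; lra |]].
  rewrite <- (sqrt_pow2 N) by lra. apply sqrt_le_1_alt; lra.
Qed.

Lemma norm3_sph (r th ph : R) : norm3 (sph r th ph) = Rabs r.
Proof.
  unfold norm3, sph. rewrite <- sqrt_Rsqr_abs. f_equal.
  pose proof (sin2_cos2 th) as Eth. pose proof (sin2_cos2 ph) as Eph. unfold Rsqr in *.
  transitivity (r * r * (sin th * sin th * (sin ph * sin ph + cos ph * cos ph) + cos th * cos th)).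
  - ring.
  - rewrite Eph, Rmult_1_r, Eth. ring.
Qed.

Lemma norm3_add_ge (x z : R3) : norm3 z - norm3 x <= norm3 (add3 x z).
Proof.
  destruct x as [[x1 x2] x3], z as [[z1 z2] z3]. unfold norm3, add3.
  assert (Hsq : forall u v w, sqrt (u ^ 2 + v ^ 2 + w ^ 2) ^ 2 = u ^ 2 + v ^ 2 + w ^ 2)
    by (intros; apply pow2_sqrt; nra).
  pose proof (Hsq x1 x2 x3) as Hx. pose proof (Hsq z1 z2 z3) as Hz.
  pose proof (Hsq (x1 + z1) (x2 + z2) (x3 + z3)) as Hxz.
  set (a := sqrt (x1 ^ 2 + x2 ^ 2 + x3 ^ 2)) in *.
  set (b := sqrt (z1 ^ 2 + z2 ^ 2 + z3 ^ 2)) in *.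
  set (n := sqrt ((x1 + z1) ^ 2 + (x2 + z2) ^ 2 + (x3 + z3) ^ 2)) in *.
  assert (0 <= a) by apply sqrt_pos. assert (0 <= b) by apply sqrt_pos.
  assert (0 <= n) by apply sqrt_pos.
  (* Cauchy-Schwarz via Lagrange's identity *)
  assert (Hcs : (x1 * z1 + x2 * z2 + x3 * z3) ^ 2 <= (a * b) ^ 2).
  { rewrite Rpow_mult_distr, Hx, Hz.
    assert (0 <= (x1 * z2 - x2 * z1) ^ 2 + (x1 * z3 - x3 * z1) ^ 2 + (x2 * z3 - x3 * z2) ^ 2)
      by (repeat apply Rplus_le_le_0_compat; apply pow2_ge_0).
    nra. }
  assert (0 <= a * b) by (apply Rmult_le_pos; auto).
  assert (Hdot : - (a * b) <= x1 * z1 + x2 * z2 + x3 * z3) by nra.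
  nra.
Qed.

Lemma norm3_add_sph_sph_sqr (a th0 ph0 r th ph : R) :
  norm3 (add3 (sph (- a) th0 ph0) (sph r th ph)) ^ 2 =
  (r - a) ^ 2 + 4 * a * r * sin ((th - th0) / 2) ^ 2
  + 4 * a * r * (sin th * sin th0) * sin ((ph - ph0) / 2) ^ 2.
Proof.
  assert (Hhalf : forall y, 4 * sin (y / 2) ^ 2 = 2 - 2 * cos y).
  { intros y. replace y with (2 * (y / 2)) at 2 by field. rewrite cos_2a_sin. ring. }
  unfold norm3, add3, sph.
  rewrite pow2_sqrt by (repeat apply Rplus_le_le_0_compat; apply pow2_ge_0).
  replace (4 * a * r * sin ((th - th0) / 2) ^ 2)
    with (a * r * (4 * sin ((th - th0) / 2) ^ 2)) by ring.
  replace (4 * a * r * (sin th * sin th0) * sin ((ph - ph0) / 2) ^ 2)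
    with (a * r * (sin th * sin th0) * (4 * sin ((ph - ph0) / 2) ^ 2)) by ring.
  rewrite !Hhalf, !cos_minus.
  pose proof (sin2_cos2 th) as E1. pose proof (sin2_cos2 th0) as E2.
  pose proof (sin2_cos2 ph) as E3. pose proof (sin2_cos2 ph0) as E4. unfold Rsqr in *.
  transitivity ((r - a) ^ 2
    + a * r * (2 - 2 * (cos th * cos th0 + sin th * sin th0))
    + a * r * (sin th * sin th0) * (2 - 2 * (cos ph * cos ph0 + sin ph * sin ph0))
    + a ^ 2 * (sin th0 * sin th0 * (sin ph0 * sin ph0 + cos ph0 * cos ph0 - 1)
               + (sin th0 * sin th0 + cos th0 * cos th0 - 1))
    + r ^ 2 * (sin th * sin th * (sin ph * sin ph + cos ph * cos ph - 1)
               + (sin th * sin th + cos th * cos th - 1))).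
  - ring.
  - rewrite E1, E2, E3, E4. ring.
Qed.

Lemma polar_coordinates (u v : R) :
  exists ph, -PI <= ph <= PI /\
    u = sqrt (u ^ 2 + v ^ 2) * cos ph /\ v = sqrt (u ^ 2 + v ^ 2) * sin ph.
Proof.
  pose proof PI_RGT_0 as HPI.
  set (rho := sqrt (u ^ 2 + v ^ 2)).
  assert (Hrho2 : rho ^ 2 = u ^ 2 + v ^ 2) by (apply pow2_sqrt; nra).
  assert (Hrho0 : 0 <= rho) by apply sqrt_pos. clearbody rho.
  destruct (Req_dec rho 0) as [Hz | Hnz].
  { exists 0. rewrite cos_0, sin_0. nra. }
  assert (Hu : -1 <= u / rho <= 1).
  { assert (E : u / rho * rho = u) by (field; lra).
    split; apply (Rmult_le_reg_r rho); try lra; rewrite E; nra. }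
  assert (Hsin : sqrt (1 - (u / rho)²) = Rabs v / rho).
  { rewrite <- (sqrt_pow2 (Rabs v / rho)) by (pose proof (Rabs_pos v); apply Rdiv_le_0_compat; lra).
    f_equal. unfold Rsqr.
    replace ((Rabs v / rho) ^ 2) with (v ^ 2 / rho ^ 2)
      by (unfold Rdiv; rewrite Rpow_mult_distr, pow2_abs; field; lra).
    replace (v ^ 2) with (rho ^ 2 - u ^ 2) by lra. field. lra. }
  pose proof (acos_bound (u / rho)) as Hb.
  pose proof (cos_acos _ Hu) as Hc. pose proof (sin_acos _ Hu) as Hs. rewrite Hsin in Hs.
  destruct (Rle_or_lt 0 v) as [Hv | Hv].
  - exists (acos (u / rho)). rewrite Hc, Hs, Rabs_right by lra.
    split; [lra | split; field; lra].
  - exists (- acos (u / rho)). rewrite cos_neg, sin_neg, Hc, Hs, Rabs_left by lra.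
    split; [lra | split; field; lra].
Qed.

Lemma spherical_coordinates (x : R3) :
  exists th ph, 0 <= th <= PI /\ -PI <= ph <= PI /\ x = sph (norm3 x) th ph.
Proof.
  destruct x as [[x1 x2] x3]. unfold norm3.
  set (a := sqrt (x1 ^ 2 + x2 ^ 2 + x3 ^ 2)).
  assert (Ha2 : a ^ 2 = x1 ^ 2 + x2 ^ 2 + x3 ^ 2) by (apply pow2_sqrt; nra).
  assert (Ha0 : 0 <= a) by apply sqrt_pos. clearbody a.
  destruct (polar_coordinates x1 x2) as (ph & Hph & E1 & E2).
  set (rho := sqrt (x1 ^ 2 + x2 ^ 2)) in E1, E2.
  assert (Hrho2 : rho ^ 2 = x1 ^ 2 + x2 ^ 2) by (apply pow2_sqrt; nra).
  assert (Hrho0 : 0 <= rho) by apply sqrt_pos. clearbody rho.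
  destruct (Req_dec a 0) as [Hz | Hnz].
  { exists 0, ph. unfold sph. rewrite sin_0, cos_0.
    assert (x1 = 0 /\ x2 = 0 /\ x3 = 0) as (-> & -> & ->) by nra.
    split; [pose proof PI_RGT_0; lra | split; [auto | subst a; f_equal; [f_equal|]; ring]]. }
  assert (Hc : -1 <= x3 / a <= 1).
  { assert (E : x3 / a * a = x3) by (field; lra).
    split; apply (Rmult_le_reg_r a); try lra; rewrite E; nra. }
  exists (acos (x3 / a)), ph. split; [apply acos_bound | split; [exact Hph |]].
  assert (Hsin : a * sin (acos (x3 / a)) = rho).
  { rewrite sin_acos by exact Hc.
    rewrite <- (sqrt_pow2 a) at 1 by lra.
    rewrite <- sqrt_mult_alt by nra.
    replace (a ^ 2 * (1 - (x3 / a)²)) with (rho ^ 2)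
      by (unfold Rsqr; transitivity (a ^ 2 - x3 ^ 2); [lra | field; lra]).
    apply sqrt_pow2; lra. }
  unfold sph. rewrite cos_acos by exact Hc. rewrite Hsin.
  f_equal; [f_equal; lra | field; lra].
Qed.

Lemma antipodal_spherical_coordinates (x : R3) :
  exists th ph, 0 <= th <= PI /\ -PI <= ph <= PI /\ x = sph (- norm3 x) th ph.
Proof.
  destruct x as [[x1 x2] x3].
  destruct (spherical_coordinates (- x1, - x2, - x3)) as (th & ph & Hth & Hph & E).
  exists th, ph. split; [exact Hth | split; [exact Hph |]].
  replace (norm3 (x1, x2, x3)) with (norm3 (- x1, - x2, - x3))
    by (unfold norm3; f_equal; ring).
  set (n := norm3 (- x1, - x2, - x3)) in *. clearbody n.
  unfold sph in *. injection E as E1 E2 E3.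
  rewrite !Ropp_mult_distr_l_reverse. f_equal; [f_equal|]; lra.
Qed.

Lemma is_RInt_inv_quadratic (A k c a b : R) : 0 < A -> 0 < k ->
  is_RInt (fun ph => / (A + k * (ph - c) ^ 2)) a b
    ((atan (sqrt (k / A) * (b - c)) - atan (sqrt (k / A) * (a - c))) / sqrt (k * A)).
Proof.
  intros HA Hk.
  set (l := sqrt (k / A)).
  assert (Hl : 0 < l) by (apply sqrt_lt_R0, Rdiv_lt_0_compat; lra).
  assert (Hl2 : l ^ 2 = k / A) by (apply pow2_sqrt, Rlt_le, Rdiv_lt_0_compat; lra).
  assert (HlA : sqrt (k * A) = l * A).
  { apply Rsqr_inj; [apply sqrt_pos | nra |]. rewrite Rsqr_sqrt by nra. unfold Rsqr.
    replace (l * A * (l * A)) with (l ^ 2 * A ^ 2) by ring. rewrite Hl2. field. lra. }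
  rewrite HlA. clearbody l.
  assert (Hk' : k = l ^ 2 * A) by (rewrite Hl2; field; lra). subst k.
  set (G := fun y => atan (l * (y - c)) / (l * A)).
  replace ((atan (l * (b - c)) - atan (l * (a - c))) / (l * A)) with (minus (G b) (G a)).
  2:{ unfold G, minus, plus, opp; simpl. field. nra. }
  apply (@is_RInt_derive R_CompleteNormedModule); unfold G.
  - intros p _. auto_derive; [easy |].
    pose proof (pow2_ge_0 (p - c)). field. repeat split; apply Rgt_not_eq; nra.
  - intros p _. apply (@ex_derive_continuous R_AbsRing R_NormedModule). auto_derive.
    apply Rgt_not_eq. pose proof (pow2_ge_0 (p - c)). nra.
Qed.

Lemma RInt_inv_quadratic_le (A k c a b : R) : 0 < A -> 0 < k ->
  RInt (fun ph => / (A + k * (ph - c) ^ 2)) a b <= PI / sqrt (k * A).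
Proof.
  intros HA Hk. rewrite (is_RInt_unique _ _ _ _ (is_RInt_inv_quadratic A k c a b HA Hk)).
  assert (0 < sqrt (k * A)) by (apply sqrt_lt_R0; nra).
  pose proof (atan_bound (sqrt (k / A) * (b - c))).
  pose proof (atan_bound (sqrt (k / A) * (a - c))).
  apply Rmult_le_compat_r; [apply Rlt_le, Rinv_0_lt_compat |]; lra.
Qed.

Lemma ex_RInt_inv_sin_sqr (A B c a b : R) : 0 < A -> 0 <= B ->
  ex_RInt (fun ph => / (A + B * sin ((ph - c) / 2) ^ 2)) a b.
Proof.
  intros HA HB. apply (@ex_RInt_continuous R_CompleteNormedModule). intros p _.
  apply (@ex_derive_continuous R_AbsRing R_NormedModule). auto_derive.
  pose proof (pow2_ge_0 (sin ((p - c) / 2))). apply Rgt_not_eq. nra.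
Qed.

Lemma RInt_inv_sin_sqr_le_len (A B c a b : R) : 0 < A -> 0 <= B -> a <= b ->
  RInt (fun ph => / (A + B * sin ((ph - c) / 2) ^ 2)) a b <= (b - a) / A.
Proof.
  intros HA HB Hab.
  apply Rle_trans with (RInt (fun _ => / A) a b).
  - apply RInt_le; auto using ex_RInt_inv_sin_sqr, ex_RInt_const.
    intros p _. apply Rinv_le_contravar; [lra |].
    pose proof (pow2_ge_0 (sin ((p - c) / 2))). nra.
  - rewrite RInt_const. apply Req_le. unfold scal; simpl. unfold mult; simpl. field. lra.
Qed.

Lemma inv_sin_sqr_le_two_bumps (A B c ph : R) : 0 < A -> 0 <= B -> -PI <= ph - c <= 3 * PI ->
  / (A + B * sin ((ph - c) / 2) ^ 2)
  <= / (A + B / 36 * (ph - c) ^ 2) + / (A + B / 36 * (ph - (c + 2 * PI)) ^ 2).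
Proof.
  intros HA HB Hph.
  assert (Hbump : forall y, 0 < / (A + B / 36 * y ^ 2))
    by (intros y; apply Rinv_0_lt_compat; pose proof (pow2_ge_0 y); nra).
  assert (Hcmp : forall y, Rabs (y / 2) <= PI / 2 ->
            / (A + B * sin (y / 2) ^ 2) <= / (A + B / 36 * y ^ 2)).
  { intros y Hy. pose proof (sin_sqr_ge (y / 2) Hy). pose proof (pow2_ge_0 y).
    apply Rinv_le_contravar; [nra |].
    replace (B / 36 * y ^ 2) with (B * ((y / 2) ^ 2 / 9)) by field. nra. }
  pose proof (Hbump (ph - c)). pose proof (Hbump (ph - (c + 2 * PI))).
  destruct (Rle_or_lt (ph - c) PI) as [Hle | Hgt].
  - pose proof (Hcmp (ph - c) ltac:(apply Rabs_le; lra)). lra.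
  - replace ((ph - c) / 2) with ((ph - (c + 2 * PI)) / 2 + PI) by field.
    rewrite neg_sin, <- Rsqr_pow2, <- Rsqr_neg, Rsqr_pow2.
    pose proof (Hcmp (ph - (c + 2 * PI)) ltac:(apply Rabs_le; lra)). lra.
Qed.

Lemma RInt_inv_sin_sqr_le (A B c : R) : 0 < A -> 0 < B -> -PI <= c <= PI ->
  RInt (fun ph => / (A + B * sin ((ph - c) / 2) ^ 2)) 0 (2 * PI) <= 12 * PI / sqrt (A * B).
Proof.
  intros HA HB Hc. pose proof PI_RGT_0.
  assert (Hk : 0 < B / 36) by lra.
  assert (Hex : forall c', ex_RInt (fun ph => / (A + B / 36 * (ph - c') ^ 2)) 0 (2 * PI))
    by (intros c'; eexists; apply is_RInt_inv_quadratic; lra).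
  apply Rle_trans with (RInt (fun ph => plus (/ (A + B / 36 * (ph - c) ^ 2))
                                           (/ (A + B / 36 * (ph - (c + 2 * PI)) ^ 2))) 0 (2 * PI)).
  - apply RInt_le;
      [lra | apply ex_RInt_inv_sin_sqr; lra | apply (@ex_RInt_plus R_NormedModule); auto |].
    intros p Hp. apply inv_sin_sqr_le_two_bumps; lra.
  - rewrite (@RInt_plus R_CompleteNormedModule) by auto.
    assert (E : sqrt (B / 36 * A) = sqrt (A * B) / 6).
    { replace (B / 36 * A) with ((A * B) / 6 ^ 2) by field.
      rewrite sqrt_div_alt, sqrt_pow2 by lra. reflexivity. }
    pose proof (RInt_inv_quadratic_le A (B / 36) c 0 (2 * PI) HA Hk).
    pose proof (RInt_inv_quadratic_le A (B / 36) (c + 2 * PI) 0 (2 * PI) HA Hk).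
    rewrite E in *. assert (0 < sqrt (A * B)) by (apply sqrt_lt_R0; nra).
    replace (12 * PI / sqrt (A * B)) with (PI / (sqrt (A * B) / 6) + PI / (sqrt (A * B) / 6))
      by (field; lra).
    apply Rplus_le_compat; assumption.
Qed.

Lemma RInt_inv_Rpower_le (N : R -> R) (A B ph0 q K : R) : 0 < A -> 0 <= B -> 0 <= q -> 0 <= K ->
  (forall ph, N ph ^ 2 = A + B * sin ((ph - ph0) / 2) ^ 2) -> (forall ph, 0 < N ph) ->
  ex_RInt (fun ph => / Rpower (N ph) (q + 2) * K) 0 (2 * PI) ->
  RInt (fun ph => / Rpower (N ph) (q + 2) * K) 0 (2 * PI)
  <= K / Rpower (sqrt A) q * RInt (fun ph => / (A + B * sin ((ph - ph0) / 2) ^ 2)) 0 (2 * PI).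
Proof.
  intros HA HB Hq HK HN Hpos Hex. pose proof PI_RGT_0.
  rewrite <- (@RInt_scal R_CompleteNormedModule) by (apply ex_RInt_inv_sin_sqr; lra).
  apply RInt_le;
    [lra | exact Hex | apply (@ex_RInt_scal R_NormedModule), ex_RInt_inv_sin_sqr; lra |].
  intros ph _.
  assert (HAN : 0 < A <= N ph ^ 2)
    by (rewrite HN; pose proof (pow2_ge_0 (sin ((ph - ph0) / 2))); nra).
  pose proof (Rpower_inv_le (N ph) A q HAN Hq (Hpos ph)) as Hle. rewrite HN in Hle.
  assert (Hpt : / Rpower (N ph) (q + 2) * K
                <= K / Rpower (sqrt A) q * / (A + B * sin ((ph - ph0) / 2) ^ 2)).
  { unfold Rdiv. rewrite (Rmult_comm K), Rmult_assoc, (Rmult_comm K), <- Rmult_assoc.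
    apply Rmult_le_compat_r; assumption. }
  exact Hpt.
Qed.

Lemma sin_mul_RInt_inv_sin_sqr_le (A c w s s0 ph0 : R) :
  0 < c -> 0 <= w -> 0 < s -> 0 <= s0 -> s - s0 <= w -> (1 + c * w) ^ 2 / 4 <= A ->
  -PI <= ph0 <= PI ->
  s * RInt (fun ph => / (A + 36 * c ^ 2 * (s * s0) * sin ((ph - ph0) / 2) ^ 2)) 0 (2 * PI)
  <= 32 * PI / (3 * c * (1 + c * w)).
Proof.
  intros Hc Hw Hs Hs0 Hsw HA Hph0. pose proof PI_RGT_0.
  set (U := 1 + c * w) in *.
  assert (HU : 1 <= U) by (unfold U; nra).
  assert (HApos : 0 < A) by nra.
  assert (HcU : 0 < 3 * c * U) by nra.
  destruct (Rle_or_lt s (4 * s0)) as [Hnear | Hfar].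
  - (* s <= 4 s0 gives 36 c^2 s s0 >= 9 c^2 s^2, so RInt_inv_sin_sqr_le absorbs the factor s *)
    assert (HB : 0 < 36 * c ^ 2 * (s * s0)) by (apply Rmult_lt_0_compat; nra).
    pose proof (RInt_inv_sin_sqr_le A _ ph0 HApos HB Hph0) as HJ.
    set (D := sqrt (A * (36 * c ^ 2 * (s * s0)))) in HJ.
    assert (HD : 3 * c * s * U / 2 <= D).
    { unfold D. rewrite <- (sqrt_pow2 (3 * c * s * U / 2)) by nra.
      apply sqrt_le_1_alt.
      replace ((3 * c * s * U / 2) ^ 2) with (U ^ 2 / 4 * (9 * c ^ 2 * s ^ 2)) by field.
      apply Rmult_le_compat; try nra. }
    apply Rle_trans with (s * (12 * PI / D)); [apply Rmult_le_compat_l; lra |].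
    assert (HDpos : 0 < D) by nra.
    replace (s * (12 * PI / D)) with (12 * PI * s / D) by (field; lra).
    apply Rdiv_le_cross; [lra | lra | nra].
  - (* s0 < s / 4 forces s <= 4 w / 3, so the crude bound 2 pi / A suffices *)
    assert (HB : 0 <= 36 * c ^ 2 * (s * s0)) by (apply Rmult_le_pos; nra).
    pose proof (RInt_inv_sin_sqr_le_len A _ ph0 0 (2 * PI) HApos HB ltac:(lra)) as HJ.
    apply Rle_trans with (s * ((2 * PI - 0) / A)); [apply Rmult_le_compat_l; lra |].
    replace (s * ((2 * PI - 0) / A)) with (2 * PI * s / A) by (field; lra).
    apply Rdiv_le_cross; [lra | lra |].
    assert (Hsw' : 3 * s <= 4 * w) by lra.
    assert (3 * c * s * U <= 4 * U ^ 2) by (unfold U in *; nra).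
    nra.
Qed.

Definition decay (c q s : R) : R := / ((1 + c * s) * Rpower (1 + c * s) q).

Lemma is_RInt_decay_right (c q th0 b : R) : 0 < c -> 0 < q -> th0 <= b ->
  is_RInt (fun th => decay c q (th - th0)) th0 b ((1 - / Rpower (1 + c * (b - th0)) q) / (c * q)).
Proof.
  intros Hc Hq Hb.
  set (G := fun th => - / Rpower (1 + c * (th - th0)) q / (c * q)).
  replace ((1 - / Rpower (1 + c * (b - th0)) q) / (c * q)) with (minus (G b) (G th0)).
  2:{ unfold G, minus, plus, opp; simpl.
      rewrite Rminus_diag, Rmult_0_r, Rplus_0_r, Rpower_base_1.
      field. split; [apply Rgt_not_eq, Rpower_gt_0 | nra]. }
  apply (@is_RInt_derive R_CompleteNormedModule); unfold G, decay, Rpower;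
    intros th Hth; rewrite Rmin_left, Rmax_right in Hth by lra.
  - auto_derive; [repeat split; try nra; apply Rgt_not_eq, exp_pos |].
    replace (th + - th0) with (th - th0) by ring.
    field. repeat split; try nra; apply Rgt_not_eq, exp_pos.
  - apply (@ex_derive_continuous R_AbsRing R_NormedModule). auto_derive.
    repeat split; try nra. apply Rgt_not_eq, Rmult_lt_0_compat; [nra | apply exp_pos].
Qed.

Lemma is_RInt_decay_left (c q th0 a : R) : 0 < c -> 0 < q -> a <= th0 ->
  is_RInt (fun th => decay c q (th0 - th)) a th0 ((1 - / Rpower (1 + c * (th0 - a)) q) / (c * q)).
Proof.
  intros Hc Hq Ha.
  set (G := fun th => / Rpower (1 + c * (th0 - th)) q / (c * q)).
  replace ((1 - / Rpower (1 + c * (th0 - a)) q) / (c * q)) with (minus (G th0) (G a)).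
  2:{ unfold G, minus, plus, opp; simpl.
      rewrite Rminus_diag, Rmult_0_r, Rplus_0_r, Rpower_base_1.
      field. split; [apply Rgt_not_eq, Rpower_gt_0 | nra]. }
  apply (@is_RInt_derive R_CompleteNormedModule); unfold G, decay, Rpower;
    intros th Hth; rewrite Rmin_left, Rmax_right in Hth by lra.
  - auto_derive; [repeat split; try nra; apply Rgt_not_eq, exp_pos |].
    replace (th0 + - th) with (th0 - th) by ring.
    field. repeat split; try nra; apply Rgt_not_eq, exp_pos.
  - apply (@ex_derive_continuous R_AbsRing R_NormedModule). auto_derive.
    repeat split; try nra. apply Rgt_not_eq, Rmult_lt_0_compat; [nra | apply exp_pos].
Qed.

Lemma is_RInt_decay (c q th0 a b : R) : 0 < c -> 0 < q -> a <= th0 <= b ->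
  is_RInt (fun th => decay c q (Rabs (th - th0))) a b
    ((2 - / Rpower (1 + c * (th0 - a)) q - / Rpower (1 + c * (b - th0)) q) / (c * q)).
Proof.
  intros Hc Hq Hab.
  pose proof (Rpower_gt_0 (1 + c * (th0 - a)) q). pose proof (Rpower_gt_0 (1 + c * (b - th0)) q).
  replace ((2 - / Rpower (1 + c * (th0 - a)) q - / Rpower (1 + c * (b - th0)) q) / (c * q))
    with (plus ((1 - / Rpower (1 + c * (th0 - a)) q) / (c * q))
               ((1 - / Rpower (1 + c * (b - th0)) q) / (c * q)))
    by (unfold plus; simpl; field; repeat split; apply Rgt_not_eq; assumption).
  apply (@is_RInt_Chasles R_CompleteNormedModule) with th0.
  - apply (is_RInt_ext (fun th => decay c q (th0 - th))); [| apply is_RInt_decay_left; lra].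
    intros th Hth. rewrite Rmin_left, Rmax_right in Hth by lra.
    rewrite Rabs_left by lra. f_equal. ring.
  - apply (is_RInt_ext (fun th => decay c q (th - th0))); [| apply is_RInt_decay_right; lra].
    intros th Hth. rewrite Rmin_left, Rmax_right in Hth by lra.
    rewrite Rabs_right by lra. reflexivity.
Qed.

Lemma RInt_decay_le (c q th0 a b : R) : 0 < c -> 0 < q -> a <= th0 <= b ->
  RInt (fun th => decay c q (Rabs (th - th0))) a b <= 2 / (c * q).
Proof.
  intros Hc Hq Hab. rewrite (is_RInt_unique _ _ _ _ (is_RInt_decay c q th0 a b Hc Hq Hab)).
  pose proof (Rinv_0_lt_compat _ (Rpower_gt_0 (1 + c * (th0 - a)) q)).
  pose proof (Rinv_0_lt_compat _ (Rpower_gt_0 (1 + c * (b - th0)) q)).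
  apply Rmult_le_compat_r; [apply Rlt_le, Rinv_0_lt_compat; nra | lra].
Qed.

Lemma continuity_2d_pt_continuous_l (f : R -> R -> R) (u v : R) :
  continuity_2d_pt f u v -> continuous (fun u' => f u' v) u.
Proof.
  intros Hf. apply continuity_pt_filterlim. intros eps Heps.
  destruct (Hf (mkposreal eps Heps)) as [d Hd].
  exists d. split; [apply cond_pos |]. intros z [_ Hz]. simpl in *. unfold R_dist in *.
  apply Hd; auto. rewrite Rminus_diag, Rabs_R0. apply cond_pos.
Qed.

Lemma continuous_RInt_param (f : R -> R -> R) (a b v : R) : a < b ->
  (forall u v, continuity_2d_pt f u v) ->
  continuous (fun v => RInt (fun u => f u v) a b) v.
Proof.
  intros Hab Hf.
  assert (Hex : forall v, ex_RInt (fun u => f u v) a b).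
  { intros v'. apply (@ex_RInt_continuous R_CompleteNormedModule). intros z _.
    apply continuity_2d_pt_continuous_l, Hf. }
  apply continuity_pt_filterlim. intros eps Heps.
  assert (He : 0 < eps / (2 * (b - a))) by (apply Rdiv_lt_0_compat; lra).
  destruct (uniform_continuity_2d_1d f a b v (fun u _ => Hf u v) (mkposreal _ He)) as [d Hd].
  exists d. split; [apply cond_pos |]. intros v' [_ Hv]. simpl in *. unfold R_dist in *.
  rewrite <- (@RInt_minus R_CompleteNormedModule) by auto.
  apply Rle_lt_trans with ((b - a) * (eps / (2 * (b - a)))).
  - apply abs_RInt_le_const; [lra | apply (@ex_RInt_minus R_NormedModule); auto |].
    intros u Hu. unfold minus, plus, opp; simpl. left.
    pose proof (cond_pos d). apply Rabs_lt_between' in Hv.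
    apply (Hd u v u v'); try lra. rewrite Rminus_diag, Rabs_R0. apply cond_pos.
  - replace ((b - a) * (eps / (2 * (b - a)))) with (eps / 2) by (field; lra). lra.
Qed.

Lemma continuity_2d_pt_l (g : R -> R) (u v : R) :
  continuity_pt g u -> continuity_2d_pt (fun u' _ => g u') u v.
Proof.
  intros Hg. apply (continuity_1d_2d_pt_comp g (fun u' _ => u')); auto using continuity_2d_pt_id1.
Qed.

Lemma continuity_2d_pt_r (g : R -> R) (u v : R) :
  continuity_pt g v -> continuity_2d_pt (fun _ v' => g v') u v.
Proof.
  intros Hg. apply (continuity_1d_2d_pt_comp g (fun _ v' => v')); auto using continuity_2d_pt_id2.
Qed.

Lemma continuity_2d_pt_pow2 (f : R -> R -> R) (u v : R) :
  continuity_2d_pt f u v -> continuity_2d_pt (fun u' v' => f u' v' ^ 2) u v.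
Proof.
  intros Hf. apply (continuity_2d_pt_ext (fun u' v' => f u' v' * (f u' v' * 1)));
    [intros; reflexivity |].
  auto using continuity_2d_pt_mult, continuity_2d_pt_const.
Qed.

Lemma sphere_integrand_continuity_2d (x : R3) (r p : R) :
  (forall th ph, 0 < norm3 (add3 x (sph r th ph))) ->
  forall ph th, continuity_2d_pt
    (fun ph th => / Rpower (norm3 (add3 x (sph r th ph))) p * (r ^ 2 * sin th)) ph th.
Proof.
  destruct x as [[x1 x2] x3]. intros Hpos ph th.
  set (h := fun ph th => (x1 + r * sin th * cos ph) ^ 2 + (x2 + r * sin th * sin ph) ^ 2
                         + (x3 + r * cos th) ^ 2).
  apply (continuity_2d_pt_ext (fun ph th => / Rpower (sqrt (h ph th)) p * (r ^ 2 * sin th)));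
    [reflexivity |].
  assert (Hh : 0 < h ph th).
  { specialize (Hpos th ph). unfold norm3, add3, sph in Hpos.
    rewrite <- sqrt_0 in Hpos. apply sqrt_lt_0_alt in Hpos. exact Hpos. }
  apply continuity_2d_pt_mult.
  - apply (continuity_1d_2d_pt_comp (fun s => / Rpower (sqrt s) p) h).
    + apply (proj2 (continuity_pt_filterlim _ _)).
      apply (@ex_derive_continuous R_AbsRing R_NormedModule (fun s => / Rpower (sqrt s) p)).
      unfold Rpower. auto_derive.
      repeat split; auto; try apply sqrt_lt_R0; auto; apply Rgt_not_eq, exp_pos.
    + unfold h. pose proof continuity_sin. pose proof continuity_cos.
      repeat first [ apply continuity_2d_pt_pow2 | apply continuity_2d_pt_plus
        | apply continuity_2d_pt_mult | apply continuity_2d_pt_const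
        | apply continuity_2d_pt_l; auto | apply continuity_2d_pt_r; auto ].
  - apply continuity_2d_pt_mult; [apply continuity_2d_pt_const |].
    apply continuity_2d_pt_r, continuity_sin.
Qed.

Section SphereIntegralEstimate.

Variables a r th0 ph0 q : R.
Hypothesis Ha : 0 < a.
Hypothesis Hra : 1 <= r - a.
Hypothesis Hth0 : 0 <= th0 <= PI.
Hypothesis Hph0 : -PI <= ph0 <= PI.
Hypothesis Hq : 0 < q <= 1.

Let c := sqrt (a * r) / 3.

Let integrand (ph th : R) : R :=
  / Rpower (norm3 (add3 (sph (- a) th0 ph0) (sph r th ph))) (q + 2) * (r ^ 2 * sin th).

Lemma c_gt_0 : 0 < c.
Proof. apply Rdiv_lt_0_compat; [apply sqrt_lt_R0; nra | lra]. Qed.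

Lemma c_sqr : 36 * c ^ 2 = 4 * a * r.
Proof.
  unfold c. replace ((sqrt (a * r) / 3) ^ 2) with (sqrt (a * r) ^ 2 / 9) by field.
  rewrite pow2_sqrt by nra. field.
Qed.

Lemma norm3_add_sph_pos (th ph : R) : 0 < norm3 (add3 (sph (- a) th0 ph0) (sph r th ph)).
Proof.
  pose proof (norm3_add_ge (sph (- a) th0 ph0) (sph r th ph)) as H.
  rewrite !norm3_sph, Rabs_Ropp, !Rabs_right in H by lra. lra.
Qed.

Lemma integrand_continuity_2d (ph th : R) : continuity_2d_pt integrand ph th.
Proof. apply sphere_integrand_continuity_2d, norm3_add_sph_pos. Qed.

Lemma phi_free_part_ge (th : R) : 0 <= th <= PI ->
  (1 + c * Rabs (th - th0)) ^ 2 / 4 <= (r - a) ^ 2 + 4 * a * r * sin ((th - th0) / 2) ^ 2.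
Proof.
  intros Hth. pose proof PI_RGT_0. pose proof c_gt_0. pose proof c_sqr.
  set (w := Rabs (th - th0)).
  assert (Hsin : w ^ 2 / 36 <= sin ((th - th0) / 2) ^ 2).
  { pose proof (sin_sqr_ge ((th - th0) / 2) ltac:(apply Rabs_le; lra)) as Hs.
    unfold w. rewrite pow2_abs.
    replace ((th - th0) ^ 2 / 36) with (((th - th0) / 2) ^ 2 / 9) by field. exact Hs. }
  assert (1 <= (r - a) ^ 2) by nra.
  assert (c ^ 2 * w ^ 2 <= 4 * a * r * sin ((th - th0) / 2) ^ 2) by nra.
  pose proof (pow2_ge_0 (c * w - 1)). nra.
Qed.

Lemma RInt_sphere_slice_le (th : R) : 0 < th < PI ->
  RInt (fun ph => integrand ph th) 0 (2 * PI)
  <= 64 * PI * r ^ 2 / (3 * c) * decay c q (Rabs (th - th0)).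
Proof.
  intros Hth. pose proof PI_RGT_0. pose proof c_gt_0 as Hc.
  set (U := 1 + c * Rabs (th - th0)).
  assert (HU : 1 <= U) by (unfold U; pose proof (Rabs_pos (th - th0)); nra).
  assert (Hsth : 0 < sin th) by (apply sin_gt_0; lra).
  assert (Hsth0 : 0 <= sin th0) by (apply sin_ge_0; lra).
  set (A := (r - a) ^ 2 + 4 * a * r * sin ((th - th0) / 2) ^ 2).
  assert (HUA : U ^ 2 / 4 <= A) by (apply phi_free_part_ge; lra).
  assert (HA : 0 < A) by nra.
  eapply Rle_trans.
  { apply (RInt_inv_Rpower_le _ A (36 * c ^ 2 * (sin th * sin th0)) ph0 q); try nra.
    - apply Rmult_le_pos; nra.
    - intros ph. rewrite norm3_add_sph_sph_sqr, c_sqr. unfold A. ring.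
    - apply norm3_add_sph_pos.
    - apply (@ex_RInt_continuous R_CompleteNormedModule). intros ph _.
      apply (continuity_2d_pt_continuous_l integrand), integrand_continuity_2d. }
  set (J := RInt _ 0 (2 * PI)).
  assert (HJ : sin th * J <= 32 * PI / (3 * c * U)).
  { apply sin_mul_RInt_inv_sin_sqr_le;
      [lra | apply Rabs_pos | lra | lra | apply sin_sub_le | exact HUA | lra]. }
  set (P := Rpower (sqrt A) q). set (Q := Rpower U q).
  assert (HP : 0 < P) by apply Rpower_gt_0. assert (HQ : 0 < Q) by apply Rpower_gt_0.
  assert (HPQ : Q / 2 <= P).
  { eapply Rle_trans; [apply Rpower_half_ge; lra |].
    apply Rle_Rpower_l; [lra | split; [lra |]].
    rewrite <- (sqrt_pow2 (U / 2)) by lra. apply sqrt_le_1_alt. lra. }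
  replace (r ^ 2 * sin th / P * J) with (r ^ 2 * (sin th * J) / P) by (field; lra).
  change (decay c q (Rabs (th - th0))) with (/ (U * Q)).
  apply Rdiv_le_cross; [lra | nra |].
  apply Rle_trans with (r ^ 2 * (32 * PI / (3 * c * U)) * (U * Q)).
  - apply Rmult_le_compat_r; [nra |]. apply Rmult_le_compat_l; [nra | exact HJ].
  - replace (r ^ 2 * (32 * PI / (3 * c * U)) * (U * Q)) with (64 * PI * r ^ 2 / (3 * c) * (Q / 2))
      by (field; split; apply Rgt_not_eq; nra).
    apply Rmult_le_compat_l; [apply Rdiv_le_0_compat; nra | exact HPQ].
Qed.

Lemma sphere_integral_le :
  sphere_integral r (fun z => / Rpower (norm3 (add3 (sph (- a) th0 ph0) z)) (q + 2))
  <= 384 * PI * r / (a * q).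
Proof.
  pose proof PI_RGT_0. pose proof c_gt_0. pose proof c_sqr.
  set (M := 64 * PI * r ^ 2 / (3 * c)).
  assert (Hdecay : ex_RInt (fun th => decay c q (Rabs (th - th0))) 0 PI)
    by (eexists; apply is_RInt_decay; lra).
  apply Rle_trans with (RInt (fun th => scal M (decay c q (Rabs (th - th0)))) 0 PI).
  - apply RInt_le; [lra | | apply (@ex_RInt_scal R_NormedModule), Hdecay |].
    + apply (@ex_RInt_continuous R_CompleteNormedModule). intros th _.
      apply (continuous_RInt_param integrand); [lra | apply integrand_continuity_2d].
    + intros th Hth. apply RInt_sphere_slice_le, Hth.
  - rewrite (@RInt_scal R_CompleteNormedModule) by exact Hdecay.
    apply Rle_trans with (M * (2 / (c * q))).
    + apply Rmult_le_compat_l; [unfold M; apply Rdiv_le_0_compat; nra |].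
      apply RInt_decay_le; lra.
    + apply Req_le. unfold M.
      replace (64 * PI * r ^ 2 / (3 * c) * (2 / (c * q))) with (128 * PI * r ^ 2 / (3 * c ^ 2 * q))
        by (field; lra).
      replace (c ^ 2) with (a * r / 9) by lra. field. lra.
Qed.

End SphereIntegralEstimate.

Theorem lemmaE6 (T S sigma : R) :
  2 <= T -> Rmax (2 * T) 6 <= S -> 0 <= sigma < 1 ->
  exists C : R,
    forall (t : R) (x : R3),
      Rabs (t - norm3 x) <= 1 ->
      Rmax (Rmax 12 T) (2 * S) <= norm3 x ->
      / (t + T) *
        sphere_integral (t + T) (fun z => / Rpower (norm3 (add3 x z)) (3 - sigma))
      <= C / Rpower (norm3 x) (1 - sigma).
Proof.
  intros HT _ Hsig. exists (384 * PI / (1 - sigma)). intros t x Ht Hx.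
  pose proof PI_RGT_0. apply Rabs_le_between' in Ht.
  assert (Hx12 : 12 <= norm3 x) by (eapply Rle_trans; [eapply Rle_trans; apply Rmax_l | exact Hx]).
  destruct (antipodal_spherical_coordinates x) as (th0 & ph0 & Hth0 & Hph0 & Ex).
  set (a := norm3 x) in *. clearbody a. subst x.
  set (q := 1 - sigma). replace (3 - sigma) with (q + 2) by (unfold q; ring).
  assert (Hq : 0 < q <= 1) by (unfold q; lra).
  eapply Rle_trans.
  { apply Rmult_le_compat_l; [apply Rlt_le, Rinv_0_lt_compat; lra |].
    apply (sphere_integral_le a (t + T) th0 ph0 q); lra. }
  replace (/ (t + T) * (384 * PI * (t + T) / (a * q))) with (384 * PI / q / a) by (field; lra).
  apply Rdiv_le_cross; [lra | apply Rpower_gt_0 |].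
  apply Rmult_le_compat_l; [apply Rdiv_le_0_compat; lra |].
  apply Rpower_le_self; lra.
Qed.
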